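(* Let $\phi:V\to V$ be a continuous coherency preserver that is not degenerate. Then the map $\Phi:V\times\mathcal{Q}\to\mathcal{Q}$, $(a,p)\mapsto\varphi_a(p)$, is continuous.
   Context: Fix an integer $n\ge4$, let $V=\mathbb{R}^n$ with its standard topology and $q(x_1,\dots,x_n)=x_n^2-\sum_{k=1}^{n-1}x_k^2$. Points $x,y$ are coherent when $q(x-y)=0$; $\mathcal{C}(a)=\{m: q(m-a)=0\}$. A coherency preserver is a map $\phi:V\to V$ with $q(b-a)=0\Rightarrow q(\phi(b)-\phi(a))=0$; it is degenerate when its range is included in some $\mathcal{C}(c)$. Let $\mathcal{Q}=\{(x_1,\dots,x_{n-1},1): \sum_{k=1}^{n-1}x_k^2=1\}$ (with the subspace topology). For a non-degenerate continuous coherency preserver $\phi$, for every $a\in V$ and $p\in\mathcal{Q}$ there is a unique $p'\in\mathcal{Q}$ with $\phi(a+\mathbb{R}p)\subset\phi(a)+\mathbb{R}p'$; one sets $\varphi_a(p):=p'$, which defines $\varphi_a:\mathcal{Q}\to\mathcal{Q}$. *)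

(* V = R^n is modelled as row vectors 'rV[R]_n over
   an abstract R : realType, with its standard (normed) topology. *)
From HB Require Import structures.
From mathcomp Require Import all_boot all_order all_algebra.
From mathcomp Require Import all_classical all_reals all_analysis.
Set Implicit Arguments. Unset Strict Implicit. Unset Printing Implicit Defensive.
Import Order.TTheory GRing.Theory Num.Theory.
Import numFieldNormedType.Exports.
Local Open Scope classical_set_scope.
Local Open Scope ring_scope.

Section Defs.
Variables (R : realType) (n : nat).
Notation V := 'rV[R]_n.

(* q(x) = x_n^2 - sum_{k=1}^{n-1} x_k^2 ; the last coordinate has index n.-1 *)
Definition qform (x : V) : R :=
  \sum_(i < n) (if (i : nat) == n.-1 then 1 else -1) * x 0 i ^+ 2.

Definition coherent (x y : V) : Prop := qform (x - y) = 0.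

Definition lightcone (a : V) : set V := [set m | qform (m - a) = 0].

Definition coherency_preserver (phi : V -> V) : Prop :=
  forall a b : V, qform (b - a) = 0 -> qform (phi b - phi a) = 0.

Definition degenerate (phi : V -> V) : Prop :=
  exists c : V, range phi `<=` lightcone c.

Definition Qset : set V :=
  [set x | (forall i : 'I_n, (i : nat) = n.-1 -> x 0 i = 1) /\
           \sum_(i < n | (i : nat) != n.-1) x 0 i ^+ 2 = 1].

Definition maps_line_into (phi : V -> V) (a p p' : V) : Prop :=
  forall t : R, exists s : R, phi (a + t *: p) = phi a + s *: p'.

(* varphi_a(p) := the (unique, by the paper) p' in Q with
   phi(a + R p) ⊂ phi(a) + R p'; chosen via classical choice. *)
Definition varphi (phi : V -> V) (a p : V) : V :=
  xget 0 [set p' | Qset p' /\ maps_line_into phi a p p'].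

End Defs.

(* Fix (a, p) and let B = mdot be the bilinear form of q.  If phi were
   constant on the line a + R p, every m with B (m - a, p) <> 0 would be
   coherent with a point of that line, hence phi m with phi a; these m are
   dense and phi is continuous, so phi would be degenerate.  Hence
   w = phi (a + t0 p) - phi a <> 0 for some t0.  Two null vectors with null
   difference are parallel, so all of phi (a + R p) lies on phi a + R w and
   varphi_a(p) is w rescaled to last coordinate 1.  This formula stays valid,
   and is continuous, for (b, r) near (a, p). *)
From HB Require Import structures.
From mathcomp Require Import all_boot all_order all_algebra.
From mathcomp Require Import all_classical all_reals all_analysis.
From mathcomp Require Import ring lra.
Set Implicit Arguments.
Unset Strict Implicit.
Unset Printing Implicit Defensive.

Import Order.TTheory GRing.Theory Num.Theory.
Import numFieldNormedType.Exports.
Local Open Scope classical_set_scope.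
Local Open Scope ring_scope.

Section Minkowski.
Variables (R : realType) (n : nat) (l : 'I_n).
Hypothesis Hl : (l : nat) = n.-1.
Notation V := 'rV[R]_n.

Definition msign (i : 'I_n) : R := if (i : nat) == n.-1 then 1 else -1.
Definition mdot (x y : V) : R := \sum_(i < n) msign i * (x 0 i * y 0 i).
Definition sdot (x y : V) : R := \sum_(i < n | (i : nat) != n.-1) x 0 i * y 0 i.

Lemma qformE (x : V) : qform x = mdot x x.
Proof. by apply: eq_bigr => i _; rewrite expr2. Qed.

Lemma qformD (x y : V) : qform (x + y) = qform x + 2 * mdot x y + qform y.
Proof.
rewrite !qformE /mdot mulr_sumr -!big_split /=; apply: eq_bigr => i _.
rewrite !mxE; ring.
Qed.

Lemma qformZ (t : R) (x : V) : qform (t *: x) = t ^+ 2 * qform x.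
Proof. by rewrite !qformE mulr_sumr; apply: eq_bigr => i _; rewrite !mxE; ring. Qed.

Lemma qformN (x : V) : qform (- x) = qform x.
Proof. by rewrite -scaleN1r qformZ sqrrN expr1n mul1r. Qed.

Lemma mdotDl (x y z : V) : mdot (x + y) z = mdot x z + mdot y z.
Proof. by rewrite /mdot -big_split /=; apply: eq_bigr => i _; rewrite !mxE; ring. Qed.

Lemma mdotZl (t : R) (x y : V) : mdot (t *: x) y = t * mdot x y.
Proof. by rewrite /mdot mulr_sumr; apply: eq_bigr => i _; rewrite !mxE; ring. Qed.

Lemma mdotZr (t : R) (x y : V) : mdot x (t *: y) = t * mdot x y.
Proof. by rewrite /mdot mulr_sumr; apply: eq_bigr => i _; rewrite !mxE; ring. Qed.

Lemma sdotNr (x y : V) : sdot x (- y) = - sdot x y.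
Proof. by rewrite /sdot -sumrN; apply: eq_bigr => i _; rewrite mxE mulrN. Qed.

Lemma eq_lastE (i : 'I_n) : ((i : nat) == n.-1) = (i == l).
Proof. by rewrite -Hl. Qed.

Lemma mdot_split (x y : V) : mdot x y = x 0 l * y 0 l - sdot x y.
Proof.
rewrite /mdot /sdot (bigD1 l) //= /msign Hl eqxx mul1r; congr (_ + _).
rewrite -sumrN; apply: eq_big => i; first by rewrite eq_lastE.
by rewrite eq_lastE => /negbTE ->; rewrite mulN1r.
Qed.

Lemma qform_split (x : V) : qform x = x 0 l ^+ 2 - sdot x x.
Proof. by rewrite qformE mdot_split expr2. Qed.

Lemma qform_eq0_sdot (x : V) : qform x = 0 -> sdot x x = x 0 l ^+ 2.
Proof. by rewrite qform_split => /eqP; rewrite subr_eq0 => /eqP. Qed.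

Lemma sdot_eq0 (x : V) :
  sdot x x = 0 -> forall i : 'I_n, (i : nat) != n.-1 -> x 0 i = 0.
Proof.
move=> /psumr_eq0P x0 i Hi; apply/eqP; rewrite -sqrf_eq0 expr2.
by apply/eqP; apply: x0 => // j _; rewrite -expr2 sqr_ge0.
Qed.

Lemma null_last_neq0 (w : V) : qform w = 0 -> w != 0 -> w 0 l != 0.
Proof.
move=> qw; apply: contraNN => /eqP w_l; apply/eqP/rowP => i; rewrite mxE.
have /sdot_eq0 wi0 : sdot w w = 0 by rewrite qform_eq0_sdot // w_l expr0n.
by have [->|ne] := eqVneq i l; [exact: w_l | apply: wi0; rewrite eq_lastE].
Qed.

Lemma null_diff_parallel (u w : V) : qform u = 0 -> qform w = 0 ->
  qform (u - w) = 0 -> w != 0 -> u = (u 0 l / w 0 l) *: w.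
Proof.
move=> qu qw quw w0; have wl0 := null_last_neq0 qw w0.
have uw : sdot u w = u 0 l * w 0 l.
  have /eqP : 2 * mdot u (- w) = 0.
    by move: quw; rewrite qformD qu qformN qw add0r addr0.
  rewrite mulf_eq0 pnatr_eq0 /= mdot_split sdotNr mxE mulrN; lra.
(* Equality in Cauchy-Schwarz for the spatial parts of u and w. *)
have S0 : \sum_(i < n | (i : nat) != n.-1) (u 0 i * w 0 l - w 0 i * u 0 l) ^+ 2 = 0.
  transitivity (w 0 l ^+ 2 * sdot u u - 2 * u 0 l * w 0 l * sdot u w
                + u 0 l ^+ 2 * sdot w w); last first.
    by rewrite !qform_eq0_sdot // uw; ring.
  rewrite /sdot !mulr_sumr -sumrB -big_split /=; apply: eq_bigr => i _; ring.
apply/rowP => i; rewrite mxE.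
have [->|ne] := eqVneq i l; first by rewrite mulfVK.
have /eqP : (u 0 i * w 0 l - w 0 i * u 0 l) ^+ 2 = 0.
  by move/psumr_eq0P: S0; apply=> [j _|]; [exact: sqr_ge0 | rewrite eq_lastE].
rewrite sqrf_eq0 subr_eq0 => /eqP uwi.
by rewrite mulrAC [u 0 l * _]mulrC -uwi mulfK.
Qed.

Definition lastv : V := \row_j (j == l)%:R.

Lemma mdot_lastv (p : V) : mdot lastv p = p 0 l.
Proof.
rewrite mdot_split /sdot mxE eqxx mul1r big1 ?subr0 // => i.
by rewrite mxE eq_lastE => /negbTE ->; rewrite mul0r.
Qed.

Lemma Qset_last (r : V) : Qset r -> r 0 l = 1.
Proof. by case=> r1 _; apply: r1. Qed.

Lemma Qset_null (r : V) : Qset r -> qform r = 0.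
Proof.
move=> Qr; rewrite qform_split (Qset_last Qr) expr1n; apply/eqP.
rewrite subr_eq0; apply/eqP; case: Qr => _ <-.
by apply: eq_bigr => i _; rewrite expr2.
Qed.

Definition qnormalize (w : V) : V := (w 0 l)^-1 *: w.

Lemma Qset_qnormalize (w : V) : qform w = 0 -> w != 0 -> Qset (qnormalize w).
Proof.
move=> qw w0; have wl0 := null_last_neq0 qw w0; split.
  move=> i Hi; have -> : i = l by apply: val_inj; rewrite /= Hi Hl.
  by rewrite mxE mulVf.
transitivity ((w 0 l)^-1 ^+ 2 * sdot w w).
  by rewrite /sdot mulr_sumr; apply: eq_bigr => i _; rewrite mxE; ring.
by rewrite qform_eq0_sdot // -exprMn mulVf // expr1n.
Qed.

Lemma qnormalizeZ (s : R) (y : V) : Qset y -> s != 0 -> qnormalize (s *: y) = y.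
Proof.
by move=> Qy s0; rewrite /qnormalize mxE (Qset_last Qy) mulr1 scalerA mulVf ?scale1r.
Qed.

Lemma cvg_qnormalize (T : Type) (F : set_system T) {FF : Filter F}
    (f : T -> V) (w : V) :
  w 0 l != 0 -> f @ F --> w -> qnormalize (f y) @[y --> F] --> qnormalize w.
Proof.
move=> wl0 fw; apply: cvgZ => //; apply: cvgV => //.
exact: (continuous_cvg _ (@coord_continuous R 1 n 0 l w) fw).
Qed.

End Minkowski.

Arguments lastv {R n}.

Lemma cvg_qform (R : realType) (n : nat) (T : Type) (F : set_system T)
    {FF : Filter F} (f : T -> 'rV[R]_n) (x : 'rV[R]_n) :
  f @ F --> x -> qform (f y) @[y --> F] --> qform x.
Proof.
move=> fx; apply: cvg_big => [|i _]; first exact: add_continuous.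
have fxi : (f y) 0 i @[y --> F] --> x 0 i.
  exact: (continuous_cvg _ (@coord_continuous R 1 n 0 i x) fx).
by apply: cvgMl_tmp; rewrite expr2; apply: cvgM.
Qed.

Lemma continuous_eq0_punctured (R : realType) (f : R -> R) (x : R) :
  {for x, continuous f} -> (forall e, e != x -> f e = 0) -> f x = 0.
Proof.
move=> fx f0; have f0x : f @ x^' --> (0 : R).
  by apply: cvg_near_cst; near=> e; rewrite f0 //; near: e; exact: nbhs_dnbhs_neq.
have fx2 : f @ x^' --> f x by exact: (cvg_trans (cvg_app f (@nbhs_dnbhs _ x)) fx).
exact: (cvg_unique _ fx2 f0x).
Unshelve. all: by end_near. Qed.

Section Preserver.
Variables (R : realType) (n : nat) (l : 'I_n).
Hypothesis Hl : (l : nat) = n.-1.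
Notation V := 'rV[R]_n.
Variable phi : V -> V.
Hypothesis cp : coherency_preserver phi.

Lemma preserver_line_null (b r : V) (t s : R) : Qset r ->
  qform (phi (b + t *: r) - phi (b + s *: r)) = 0.
Proof.
move=> Qr; apply: cp.
have -> : b + t *: r - (b + s *: r) = (t - s) *: r.
  by apply/rowP => i; rewrite !mxE; ring.
by rewrite qformZ (Qset_null Hl Qr) mulr0.
Qed.

Lemma preserver_chord_null (b r : V) (t : R) : Qset r ->
  qform (phi (b + t *: r) - phi b) = 0.
Proof. by move=> Qr; have := preserver_line_null b t 0 Qr; rewrite scale0r addr0. Qed.

Lemma varphiE (b r : V) (t0 : R) : Qset r -> phi (b + t0 *: r) != phi b ->
  varphi phi b r = qnormalize l (phi (b + t0 *: r) - phi b).
Proof.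
move=> Qr; rewrite -subr_eq0; set w := phi (b + t0 *: r) - phi b => w0.
have qw : qform w = 0 by exact: preserver_chord_null.
apply: xget_unique.
  split; first exact: Qset_qnormalize.
  move=> t; set u := phi (b + t *: r) - phi b.
  have quw : qform (u - w) = 0.
    by rewrite /u /w opprB addrA subrK; apply: preserver_line_null.
  exists (u 0 l); rewrite scalerA -(null_diff_parallel Hl _ qw quw w0).
    by rewrite /u [RHS]addrC subrK.
  exact: preserver_chord_null.
move=> y [Qy /(_ t0) [s Hs]].
have wE : w = s *: y by rewrite /w Hs addrC addKr.
have s0 : s != 0 by move: w0; rewrite wE; apply: contraNN => /eqP ->; rewrite scale0r.
by rewrite wE qnormalizeZ.
Qed.

Hypothesis cphi : continuous phi.

Lemma const_line_coherent (a p m : V) : Qset p ->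
  (forall t, phi (a + t *: p) = phi a) -> mdot (m - a) p != 0 ->
  qform (phi m - phi a) = 0.
Proof.
(* Since p is null, q (m - a - t p) = q (m - a) - 2 t B (m - a, p); t is its root. *)
move=> Qp phi_const mp0; set t := qform (m - a) / (2 * mdot (m - a) p).
rewrite -(phi_const t); apply: cp.
have -> : m - (a + t *: p) = (m - a) + (- t) *: p.
  by apply/rowP => i; rewrite !mxE; ring.
rewrite qformD qformZ (Qset_null Hl Qp) mulr0 addr0 mdotZr /t.
by field.
Qed.

Lemma const_line_degenerate (a p : V) : Qset p ->
  (forall t, phi (a + t *: p) = phi a) -> degenerate phi.
Proof.
move=> Qp phi_const; exists (phi a) => _ [m _ <-]; rewrite /lightcone /=.
have [mp0|] := eqVneq (mdot (m - a) p) 0; last exact: const_line_coherent.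
pose g (e : R) := qform (phi (m + e *: lastv l) - phi a).
have -> : qform (phi m - phi a) = g 0 by rewrite /g scale0r addr0.
apply: continuous_eq0_punctured => [|e e0].
  apply: cvg_qform; apply: cvgB; last exact: cvg_cst.
  apply: (continuous_cvg _ (@cphi _)); apply: cvgD; first exact: cvg_cst.
  by apply: cvgZr_tmp; exact: cvg_id.
apply: (const_line_coherent Qp phi_const).
have -> : m + e *: lastv l - a = (m - a) + e *: lastv l.
  by apply/rowP => i; rewrite !mxE; ring.
by rewrite mdotDl mdotZl mdot_lastv // mp0 (Qset_last Hl Qp) add0r mulr1.
Qed.

Lemma cvg_varphi (a p : V) (t0 : R) : Qset p -> phi (a + t0 *: p) != phi a ->
  (fun y : V * V => varphi phi y.1 y.2)
    @ within ([set: V] `*` @Qset R n) (nbhs (a, p)) --> varphi phi a p.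
Proof.
move=> Qp phi_t0.
pose w := fun y : V * V => phi (y.1 + t0 *: y.2) - phi y.1.
have wc : w @ nbhs (a, p) --> w (a, p).
  apply: cvgB; apply: (continuous_cvg _ (@cphi _)); last exact: cvg_fst.
  by apply: cvgD; [exact: cvg_fst | apply: cvgZ; [exact: cvg_cst | exact: cvg_snd]].
have w0 : w (a, p) != 0 by rewrite subr_eq0.
have wl0 := null_last_neq0 Hl (preserver_chord_null a t0 Qp) w0.
have near_w0 : \forall y \near (a, p), w y != 0 by apply: cvgr_neq0 wc w0.
have near_varphi : \forall y \near within ([set: V] `*` @Qset R n) (nbhs (a, p)),
    qnormalize l (w y) = varphi phi y.1 y.2.
  rewrite near_withinE; apply: filterS near_w0 => -[b r] wy0 [_ Qr] /=.
  by rewrite (varphiE (t0 := t0) Qr) // -subr_eq0.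
rewrite (varphiE Qp phi_t0); apply: cvg_trans (near_eq_cvg near_varphi) _.
by apply: cvg_within_filter; exact: cvg_qnormalize.
Qed.

End Preserver.

Theorem lemma4p2 (R : realType) (n : nat) (phi : 'rV[R]_n -> 'rV[R]_n) :
  (4 <= n)%N ->
  continuous phi ->
  coherency_preserver phi ->
  ~ degenerate phi ->
  {within [set: 'rV[R]_n] `*` @Qset R n,
     continuous (fun ap : 'rV[R]_n * 'rV[R]_n => varphi phi ap.1 ap.2)}.
Proof.
move=> n4 cphi cp ndeg.
have lt_n : (n.-1 < n)%N by rewrite ltn_predL (leq_trans _ n4).
pose l : 'I_n := Ordinal lt_n.
apply/subspace_continuousP => -[a p] [_ /= Qp].
have [t0 phi_t0] : exists t0, phi (a + t0 *: p) != phi a.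
  apply: contrapT => phi_const.
  apply/ndeg/(const_line_degenerate (l := l) (a := a) erefl cp cphi Qp) => t.
  by apply: contrapT => phi_t; apply: phi_const; exists t; apply/eqP.
exact: (cvg_varphi (l := l) erefl cp cphi Qp phi_t0).
Qed.
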